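(* Let $G\leq \mathrm{Aut}(X^* )$, $H\le G$ and $k\ge 0$. If $T:=\{v\in X^k : \psi_v(H)\text{ is finite}\}$ is non-empty, then for every $n\ge k$ the shadow $S(T,n)$ is setwise invariant under the action of $H$ on $X^n$.
   Context: $X^*$ is the free monoid on a finite set $X$, viewed as a rooted tree; $X^n$ is the set of words of length $n$; $\mathrm{Aut}(X^* )$ is the group of prefix-preserving bijections of $X^*$. For $g\in\mathrm{Aut}(X^* )$ and $u\in X^*$ the section $g_u$ is defined by $g(uw)=g(u)g_u(w)$ for all $w$, and $\psi_u(H)=\{h_u:h\in H\}$. For $T\subseteq X^k$ and $n\ge k$, the shadow of $T$ on level $n$ is $S(T,n)=\{v\in X^n: \exists t\in T,\ t \text{ is a prefix of } v\}$. *)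

From mathcomp Require Import all_boot.
From Stdlib Require List.
Set Implicit Arguments. Unset Strict Implicit. Unset Printing Implicit Defensive.

Definition word (X : finType) := seq X.

Definition is_aut (X : finType) (g : word X -> word X) : Prop :=
  bijective g /\
  (forall u : word X, size (g u) = size u) /\
  (forall u w : word X, exists w' : word X, g (u ++ w) = g u ++ w').

Definition is_subgroup_aut (X : finType) (G : (word X -> word X) -> Prop) : Prop :=
  (forall g, G g -> is_aut g) /\
  G id /\
  (forall g h, G g -> G h -> G (g \o h)) /\
  (forall g, G g -> exists g', G g' /\ cancel g g' /\ cancel g' g).

(* Section g_u: g (u ++ w) = g u ++ g_u w. *)
Definition section (X : finType) (g : word X -> word X) (u : word X) : word X -> word X :=
  fun w => drop (size u) (g (u ++ w)).

Definition psi_finite (X : finType) (H : (word X -> word X) -> Prop) (u : word X) : Prop :=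
  exists l : list (word X -> word X), forall h, H h -> List.In (section h u) l.

Definition shadow (X : finType) (T : word X -> Prop) (n : nat) : word X -> Prop :=
  fun v => size v = n /\ exists t, T t /\ exists w, v = t ++ w.

(* For h in H, every section of an element of H at h(v) factors as a section at v
   followed by the fixed section of h^-1 at h(v); hence psi_{h(v)}(H) is finite
   whenever psi_v(H) is, and T is H-invariant.  Since automorphisms preserve
   length and prefixes, each h in H maps S(T,n) into itself, and applying h^-1
   shows that the image is all of S(T,n). *)
From mathcomp Require Import all_boot.
From Stdlib Require Import FunctionalExtensionality.
From Stdlib Require List.

Set Implicit Arguments.
Unset Strict Implicit.
Unset Printing Implicit Defensive.

Section TreeAutomorphisms.

Variable X : finType.
Implicit Types (g h : word X -> word X) (u v t w : word X).

Lemma aut_size g u : is_aut g -> size (g u) = size u.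
Proof. by case=> _ []. Qed.

Lemma aut_catE g u w : is_aut g -> g (u ++ w) = g u ++ section g u w.
Proof.
move=> [_ [size_g prefix_g]]; rewrite /section.
have [w' ->] := prefix_g u w.
by rewrite -(size_g u) drop_size_cat.
Qed.

Lemma section_comp g h u :
  is_aut h -> section (g \o h) u = section g (h u) \o section h u.
Proof.
move=> aut_h; apply: functional_extensionality => w.
by rewrite /section /= aut_catE // -(aut_size u aut_h) drop_size_cat.
Qed.

Lemma psi_finite_aut_image (H : (word X -> word X) -> Prop) h t :
  is_subgroup_aut H -> H h -> psi_finite H t -> psi_finite H (h t).
Proof.
move=> [aut_H [_ [compH invH]]] Hh [l in_l].
have [h' [Hh' [hK h'K]]] := invH h Hh.
exists (map (fun f => f \o section h' (h t)) l) => g Hg.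
have -> : section g (h t) = section (g \o h) t \o section h' (h t).
  have g_eq : g = (g \o h) \o h' by apply: functional_extensionality => x /=; rewrite h'K.
  by rewrite {1}g_eq section_comp ?hK //; exact: aut_H.
by apply: (List.in_map (fun f => f \o _)); apply: in_l; exact: compH.
Qed.

Lemma shadow_aut_image (T : word X -> Prop) n h v :
  is_aut h -> (forall t, T t -> T (h t)) -> shadow T n v -> shadow T n (h v).
Proof.
move=> aut_h T_h [<- [t [Tt [w ->]]]].
split; first by rewrite (aut_size _ aut_h).
by exists (h t); split; [exact: T_h | exists (section h t w); rewrite aut_catE].
Qed.

End TreeAutomorphisms.

Lemma image_eq_of_invariant (A : Type) (S : A -> Prop) (f f' : A -> A) :
  (forall x, S x -> S (f x)) -> (forall x, S x -> S (f' x)) -> cancel f' f ->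
  forall y, (exists x, S x /\ f x = y) <-> S y.
Proof.
move=> S_f S_f' f'K y; split; first by move=> [x [Sx <-]]; exact: S_f.
by move=> Sy; exists (f' y); split; [exact: S_f' | exact: f'K].
Qed.

Theorem lemma4p2 (X : finType) (G H : (word X -> word X) -> Prop) (k : nat) :
  is_subgroup_aut G ->
  is_subgroup_aut H ->
  (forall h, H h -> G h) ->
  let T := fun v : word X => size v = k /\ psi_finite H v in
  (exists v, T v) ->
  forall n, k <= n ->
  forall h, H h ->
  forall w : word X, (exists v, shadow T n v /\ h v = w) <-> shadow T n w.
Proof.
move=> _ subH _ T _ n _ h Hh.
have [aut_H [_ [_ invH]]] := subH.
have T_H g : H g -> forall t, T t -> T (g t).
  move=> Hg t [size_t fin_t].
  by split; [rewrite (aut_size _ (aut_H g Hg)) | exact: psi_finite_aut_image].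
have [h' [Hh' [_ h'K]]] := invH h Hh.
have shadow_H g : H g -> forall v, shadow T n v -> shadow T n (g v).
  by move=> Hg v; apply: shadow_aut_image; [exact: aut_H | exact: T_H].
by apply: image_eq_of_invariant h'K; exact: shadow_H.
Qed.
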